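(* Let $G$ be a group acting linearly and isometrically on a real Hilbert space $M$. Let $X=t_0+\sigma\epsilon$ with $t_0\in M$, $\sigma>0$, $\mathbb{E}(\epsilon)=0$ and $\mathbb{E}(\|\epsilon\|^2)=1$, and let $[m_\star]$ be a Fréchet mean of $[X]$. Let $m_0$ be the orthogonal projection of $t_0$ onto $\mathrm{Fix}(M)$, and for $m\in M$ set $\nu(m)=\mathbb{E}\big(\sup_{g\in G}\langle g\cdot\epsilon,m/\|m\|\rangle\big)$ if $m\neq0$ and $\nu(0)=0$ (so $\nu(m)\in[0,1]$). Then $$d_Q([m_\star],[t_0])\le\sigma\nu(m_\star-m_0)+\sqrt{\sigma^2\nu(m_\star-m_0)^2+2\,\mathrm{dist}(t_0,\mathrm{Fix}(M))\,\sigma\,\nu(m_\star-m_0)}.$$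
   Context: $M$ is a real Hilbert space with inner product $\langle\cdot,\cdot\rangle$ and norm $\|\cdot\|$; the action is linear and isometric ($\|g\cdot x\|=\|x\|$). $\mathrm{Fix}(M)=\{x: g\cdot x=x\ \forall g\in G\}$ (a closed linear subspace). $[m]=\{g\cdot m:g\in G\}$, $d_Q([a],[b])=\inf_{g}\|g\cdot a-b\|$, $F(m)=\mathbb{E}\big(\inf_g\|g\cdot X-m\|^2\big)$, and $[m_\star]$ is a Fréchet mean of $[X]$ if $m_\star$ globally minimises $F$. *)

From HB Require Import structures.
From mathcomp Require Import all_boot all_order all_algebra.
From mathcomp Require Import all_classical all_reals all_analysis.
Set Implicit Arguments.
Unset Strict Implicit.
Unset Printing Implicit Defensive.
Import Order.TTheory GRing.Theory Num.Theory.
Local Open Scope classical_set_scope.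
Local Open Scope ring_scope.

Section Hilbert.
Variables (R : realType) (M : lmodType R) (ip : M -> M -> R).

Definition hnorm (x : M) : R := Num.sqrt (ip x x).

Definition is_real_hilbert : Prop :=
  [/\ (forall x y, ip x y = ip y x),
      (forall a x y z, ip (a *: x + y) z = a * ip x z + ip y z),
      (forall x, 0 <= ip x x),
      (forall x, ip x x = 0 -> x = 0) &
      (forall u : nat -> M,
          (forall e : R, 0 < e -> exists N : nat, forall n m : nat,
              (N <= n)%N -> (N <= m)%N -> hnorm (u n - u m) < e) ->
          exists l : M, forall e : R, 0 < e -> exists N : nat, forall n : nat,
              (N <= n)%N -> hnorm (u n - l) < e)].

Definition dist_to (t : M) (A : set M) : R := inf [set hnorm (t - y) | y in A].
End Hilbert.

Definition is_lin_isom_group_action (R : realType) (M : lmodType R)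
  (ip : M -> M -> R) (G : Type) (mul : G -> G -> G) (one : G) (inv : G -> G)
  (act : G -> M -> M) : Prop :=
  (forall a b c, mul a (mul b c) = mul (mul a b) c) /\
  (forall a, mul one a = a) /\
  (forall a, mul (inv a) a = one) /\
  (forall x, act one x = x) /\
  (forall g h x, act (mul g h) x = act g (act h x)) /\
  (forall g a x y, act g (a *: x + y) = a *: act g x + act g y) /\
  (forall g x, hnorm ip (act g x) = hnorm ip x).

Section Quotient.
Variables (R : realType) (M : lmodType R) (ip : M -> M -> R)
  (G : Type) (act : G -> M -> M).

Definition Fix : set M := [set x | forall g, act g x = x].

Definition dQ (a b : M) : R := inf [set hnorm ip (act g a - b) | g in [set: G]].

Variables (d : measure_display) (T : measurableType d) (P : probability T R).

Definition frechetF (X : T -> M) (m : M) : \bar R :=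
  (\int[P]_w ((dQ (X w) m) ^+ 2)%:E)%E.

Definition is_frechet_mean (X : T -> M) (mstar : M) : Prop :=
  forall m, (frechetF X mstar <= frechetF X m)%E.

Definition nu (eps : T -> M) (m : M) : R :=
  if m == 0 then 0 else
  fine (\int[P]_w (sup [set ip (act g (eps w)) ((hnorm ip m)^-1 *: m)
                        | g in [set: G]])%:E)%E.
End Quotient.

(* Let X = t0 + sigma eps, D = d_Q([mstar],[t0]), c = |mstar - m0| and
   u = (mstar - m0)/c.  Since m0 is fixed by G, expanding |g.X - mstar|^2 for
   every g gives
     d_Q([X],[mstar])^2 >= D^2 + sigma^2 |eps|^2 + 2 sigma <eps, t0 - m0>
                           - 2 sigma c sup_g <g.eps, u>,
   whose expectation is D^2 + sigma^2 - 2 sigma c nu.  As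
   F(mstar) <= F(t0) <= E(sigma^2 |eps|^2) = sigma^2, this yields
   D^2 <= 2 sigma c nu.  The triangle inequality and Pythagoras for the
   projection m0 give c <= D + dist(t0, Fix(M)), and solving the resulting
   quadratic inequality in D gives the bound. *)

From HB Require Import structures.
From mathcomp Require Import all_boot all_order all_algebra.
From mathcomp Require Import all_classical all_reals all_analysis.
From mathcomp Require Import measurable_realfun ring lra.
Import Order.TTheory GRing.Theory Num.Theory.
Local Open Scope classical_set_scope.
Local Open Scope ring_scope.

Set Implicit Arguments.
Unset Strict Implicit.
Unset Printing Implicit Defensive.

Lemma le_quadratic_root (R : rcfType) (D a b : R) :
  D ^+ 2 <= 2 * a * (D + b) -> D <= a + Num.sqrt (a ^+ 2 + 2 * b * a).
Proof.
move=> hD; rewrite -lerBlDl; apply: le_trans (ler_norm _) _.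
by rewrite -sqrtr_sqr; apply: ler_wsqrtr; lra.
Qed.

Definition is_inner_product (R : realType) (M : lmodType R) (ip : M -> M -> R) :=
  [/\ (forall x y, ip x y = ip y x),
      (forall a x y z, ip (a *: x + y) z = a * ip x z + ip y z),
      (forall x, 0 <= ip x x) &
      (forall x, ip x x = 0 -> x = 0)].

Lemma real_hilbert_inner_product (R : realType) (M : lmodType R)
  (ip : M -> M -> R) : is_real_hilbert ip -> is_inner_product ip.
Proof. by case. Qed.

Section InnerProduct.
Variables (R : realType) (M : lmodType R) (ip : M -> M -> R).
Hypothesis Hip : is_inner_product ip.

Lemma ipC x y : ip x y = ip y x. Proof. by case: Hip. Qed.
Lemma ip_ge0 x : 0 <= ip x x. Proof. by case: Hip. Qed.
Lemma ip_eq0 x : ip x x = 0 -> x = 0. Proof. by case: Hip => _ _ _; apply. Qed.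

Lemma ip0l z : ip 0 z = 0.
Proof. by case: Hip => _ /(_ 1 0 0 z); rewrite scaler0 addr0 mul1r; lra. Qed.
Lemma ipDl x y z : ip (x + y) z = ip x z + ip y z.
Proof. by case: Hip => _ /(_ 1 x y z); rewrite scale1r mul1r. Qed.
Lemma ipZl a x z : ip (a *: x) z = a * ip x z.
Proof. by case: Hip => _ /(_ a x 0 z); rewrite !addr0 ip0l addr0. Qed.
Lemma ipNl x z : ip (- x) z = - ip x z.
Proof. by rewrite -scaleN1r ipZl mulN1r. Qed.
Lemma ipBl x y z : ip (x - y) z = ip x z - ip y z.
Proof. by rewrite ipDl ipNl. Qed.
Lemma ip0r z : ip z 0 = 0. Proof. by rewrite ipC ip0l. Qed.
Lemma ipDr x y z : ip z (x + y) = ip z x + ip z y.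
Proof. by rewrite ipC ipDl !(ipC z). Qed.
Lemma ipZr a x z : ip z (a *: x) = a * ip z x.
Proof. by rewrite ipC ipZl ipC. Qed.
Lemma ipBr x y z : ip z (x - y) = ip z x - ip z y.
Proof. by rewrite ipC ipBl !(ipC z). Qed.

Lemma hnorm_ge0 x : 0 <= hnorm ip x. Proof. exact: sqrtr_ge0. Qed.
Lemma hnorm_sqr x : hnorm ip x ^+ 2 = ip x x.
Proof. by rewrite sqr_sqrtr // ip_ge0. Qed.
Lemma hnorm0 : hnorm ip 0 = 0. Proof. by rewrite /hnorm ip0l sqrtr0. Qed.

Lemma hnorm_eq0 x : hnorm ip x = 0 -> x = 0.
Proof. by move=> x0; apply: ip_eq0; rewrite -hnorm_sqr x0 expr0n. Qed.

Lemma hnormZ a x : hnorm ip (a *: x) = `|a| * hnorm ip x.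
Proof. by rewrite /hnorm ipZl ipZr mulrA -expr2 sqrtrM ?sqr_ge0 // sqrtr_sqr. Qed.

Lemma scale_hnorm_normalize x : hnorm ip x *: ((hnorm ip x)^-1 *: x) = x.
Proof.
have [/hnorm_eq0 ->|x0] := eqVneq (hnorm ip x) 0; first by rewrite !scaler0.
by rewrite scalerA mulfV // scale1r.
Qed.

Lemma ip_le_mean x y : ip x y <= (ip x x + ip y y) / 2.
Proof. by have := ip_ge0 (x - y); rewrite !ipBl !ipBr (ipC y x); lra. Qed.

Lemma ip_abs_le x y : `|ip x y| <= ip x x + ip y y.
Proof.
have := ip_ge0 (x + y); have := ip_le_mean x y; have := ip_ge0 x; have := ip_ge0 y.
rewrite !ipDl !ipDr (ipC y x) ler_norml => *; apply/andP; split; lra.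
Qed.

Lemma cauchy_schwarz x y : ip x y <= hnorm ip x * hnorm ip y.
Proof.
have [y0|y_neq0] := eqVneq (ip y y) 0.
  by rewrite (ip_eq0 y0) ip0r hnorm0 mulr0.
have y_gt0 : 0 < ip y y by rewrite lt_def y_neq0 ip_ge0.
have hxy : 0 <= hnorm ip x * hnorm ip y by rewrite mulr_ge0 ?hnorm_ge0.
(* expand [0 <= |x - t y|^2] at the minimiser [t = <x,y> / <y,y>] *)
set t := ip x y / ip y y.
have ht : t * ip y y = ip x y by rewrite mulfVK.
have := ip_ge0 (x - t *: y).
rewrite !ipBl !ipBr !ipZl !ipZr (ipC y x) => hmin.
have : ip x y ^+ 2 <= ip x x * ip y y.
  rewrite -subr_ge0; have -> : ip x x * ip y y - ip x y ^+ 2 =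
    (ip x x - ip x y * t - (t * ip x y - t * (t * ip y y))) * ip y y.
    by rewrite ht subrr subr0 mulrBl -mulrA ht expr2.
  by apply: mulr_ge0; [lra | exact: ltW].
by rewrite -(hnorm_sqr x) -(hnorm_sqr y) -exprMn; nra.
Qed.

Lemma hnormD_le x y : hnorm ip (x + y) <= hnorm ip x + hnorm ip y.
Proof.
rewrite -(ler_pXn2r (_ : 0 < 2)%N) ?nnegrE ?addr_ge0 ?hnorm_ge0 //.
rewrite hnorm_sqr sqrrD !hnorm_sqr !ipDl !ipDr (ipC y x).
by have := cauchy_schwarz x y; lra.
Qed.

End InnerProduct.

Section IsometricAction.
Variables (R : realType) (M : lmodType R) (ip : M -> M -> R)
  (G : Type) (mul : G -> G -> G) (one : G) (inv : G -> G) (act : G -> M -> M).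
Hypothesis Hip : is_inner_product ip.
Hypothesis HA : is_lin_isom_group_action ip mul one inv act.

Lemma act1 x : act one x = x. Proof. by case: HA => _ [_ [_ []]]. Qed.

Lemma act_invK g : cancel (act g) (act (inv g)).
Proof.
by move=> x; case: HA => _ [_ [mulVg [_ [actM _]]]]; rewrite -actM mulVg act1.
Qed.

Lemma act_linear g a x y : act g (a *: x + y) = a *: act g x + act g y.
Proof. by case: HA => _ [_ [_ [_ [_ []]]]]. Qed.

Lemma act_hnorm g x : hnorm ip (act g x) = hnorm ip x.
Proof. by case: HA => _ [_ [_ [_ [_ []]]]]. Qed.

Lemma act0 g : act g 0 = 0.
Proof.
have := act_linear g 1 0 0; rewrite !scale1r addr0 => h.
by apply: (addrI (act g 0)); rewrite addr0 -h.
Qed.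

Lemma actD g x y : act g (x + y) = act g x + act g y.
Proof. by have := act_linear g 1 x y; rewrite !scale1r. Qed.

Lemma actZ g a x : act g (a *: x) = a *: act g x.
Proof. by have := act_linear g a x 0; rewrite !addr0 act0 addr0. Qed.

Lemma actB g x y : act g (x - y) = act g x - act g y.
Proof. by rewrite -scaleN1r actD actZ scaleN1r. Qed.

Lemma act_ip g x y : ip (act g x) (act g y) = ip x y.
Proof.
have act_ipxx z : ip (act g z) (act g z) = ip z z.
  by rewrite -!(hnorm_sqr Hip) act_hnorm.
have := act_ipxx (x + y); rewrite actD !(ipDl Hip) !(ipDr Hip) !act_ipxx.
by rewrite (ipC Hip (act g y)) (ipC Hip y); lra.
Qed.

Local Notation orbit_ip x m := [set ip (act g x) m | g in [set: G]].

Lemma orbit_ip_ubound x m y : orbit_ip x m y -> y <= (ip x x + ip m m) / 2.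
Proof.
by move=> [g _ <-]; rewrite -(act_ip g x x); apply: ip_le_mean.
Qed.

Lemma ip_act_le_sup x m g : ip (act g x) m <= sup (orbit_ip x m).
Proof.
by apply: ub_le_sup; [exists ((ip x x + ip m m) / 2) => y /orbit_ip_ubound|exists g].
Qed.

Lemma sup_orbit_ip_abs x m : `|sup (orbit_ip x m)| <= ip x x + ip m m.
Proof.
have hub : sup (orbit_ip x m) <= (ip x x + ip m m) / 2.
  by apply: ge_sup; [exists (ip (act one x) m), one | exact: orbit_ip_ubound].
have := ip_act_le_sup x m one; rewrite act1 => hlb.
have := ip_abs_le Hip x m; have := ip_ge0 Hip x; have := ip_ge0 Hip m.
rewrite !ler_norml => *; apply/andP; split; lra.
Qed.

Lemma sup_orbit_ip0 x : sup (orbit_ip x 0) = 0.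
Proof.
have -> : orbit_ip x 0 = [set 0].
  by apply/seteqP; split=> [_ [g _ <-]|_ ->]; [rewrite /= ip0r|exists one; rewrite ?ip0r].
exact: sup1.
Qed.

Lemma dQ_ge0 a b : 0 <= dQ ip act a b.
Proof.
apply: lb_le_inf; first by exists (hnorm ip (act one a - b)), one.
by move=> _ [g _ <-]; apply: hnorm_ge0.
Qed.

Lemma dQ_le a b g : dQ ip act a b <= hnorm ip (act g a - b).
Proof. by apply: ge_inf; [exists 0 => _ [h _ <-]; apply: hnorm_ge0|exists g]. Qed.

Lemma dQ_le_act_r a b g : dQ ip act a b <= hnorm ip (act g b - a).
Proof.
rewrite -(act_hnorm (inv g)) actB act_invK.
have -> : hnorm ip (b - act (inv g) a) = hnorm ip (act (inv g) a - b).
  rewrite /hnorm !(ipBl Hip) !(ipBr Hip) (ipC Hip b (act _ a)).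
  by congr Num.sqrt; ring.
exact: dQ_le.
Qed.

Lemma dQ_ge a b y : (forall g, y <= hnorm ip (act g a - b)) -> y <= dQ ip act a b.
Proof.
by move=> hy; apply: lb_le_inf; [exists (hnorm ip (act one a - b)), one|move=> _ [g _ <-]].
Qed.

Lemma dQ_sqr_ge a b y :
  (forall g, y <= hnorm ip (act g a - b) ^+ 2) -> y <= dQ ip act a b ^+ 2.
Proof.
move=> hy; have [y_le0|y_gt0] := lerP y 0; first by rewrite (le_trans y_le0) ?sqr_ge0.
rewrite -(sqr_sqrtr (ltW y_gt0)) ler_pXn2r ?nnegrE ?sqrtr_ge0 ?dQ_ge0 //.
by apply: dQ_ge => g; apply: ler_wsqrtr; rewrite -(hnorm_sqr Hip).
Qed.

Lemma dQ_add_le a y : dQ ip act (a + y) a <= hnorm ip y.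
Proof. by have := dQ_le (a + y) a one; rewrite act1 addrAC subrr add0r. Qed.

Section FixedPoints.
Variables (t0 m0 : M).
Hypothesis Fix_m0 : Fix act m0.

(* Pythagoras: [t0 - y = (t0 - m0) + (m0 - y)] with [m0 - y] fixed, hence orthogonal to [t0 - m0]. *)
Lemma hnorm_sub_proj_le_dist :
  (forall y, Fix act y -> ip (t0 - m0) y = 0) ->
  hnorm ip (t0 - m0) <= dist_to ip t0 (Fix act).
Proof.
move=> orth; apply: lb_le_inf; first by exists (hnorm ip (t0 - m0)), m0.
move=> _ [y Fix_y <-]; apply: ler_wsqrtr.
have Fix_my : Fix act (m0 - y) by move=> g; rewrite actB Fix_m0 Fix_y.
have -> : t0 - y = (t0 - m0) + (m0 - y) by rewrite addrA subrK.
have := orth _ Fix_my; have := ip_ge0 Hip (m0 - y).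
move: (t0 - m0) (m0 - y) => a b b_ge0 ab0.
by rewrite !(ipDl Hip) !(ipDr Hip) (ipC Hip b) ab0; lra.
Qed.

Lemma hnorm_sub_fix_le_dQ m :
  hnorm ip (m - m0) <= dQ ip act m t0 + hnorm ip (t0 - m0).
Proof.
rewrite -lerBlDr; apply: dQ_ge => g; rewrite lerBlDr.
rewrite -(act_hnorm g (m - m0)) actB Fix_m0.
have -> : act g m - m0 = (act g m - t0) + (t0 - m0) by rewrite addrA subrK.
exact: hnormD_le.
Qed.

Lemma dQ_sqr_noise_ge (sigma : R) (x m : M) : 0 <= sigma ->
  dQ ip act m t0 ^+ 2 + sigma ^+ 2 * hnorm ip x ^+ 2 + 2 * sigma * ip x (t0 - m0)
  - 2 * sigma * hnorm ip (m - m0) *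
    sup (orbit_ip x ((hnorm ip (m - m0))^-1 *: (m - m0)))
  <= dQ ip act (t0 + sigma *: x) m ^+ 2.
Proof.
move=> sigma_ge0; apply: dQ_sqr_ge => g.
set c := hnorm ip (m - m0); set u := c^-1 *: (m - m0).
have hD : dQ ip act m t0 ^+ 2 <= hnorm ip (act g t0 - m) ^+ 2.
  by rewrite ler_pXn2r ?nnegrE ?dQ_ge0 ?hnorm_ge0 ?dQ_le_act_r.
have hS : sigma * c * ip (act g x) u <= sigma * c * sup (orbit_ip x u).
  by rewrite ler_wpM2l ?mulr_ge0 ?hnorm_ge0 ?ip_act_le_sup.
(* the fixed component [m0] of [m] pairs with the orbit of [x] independently of [g] *)
have hm : ip (act g x) m = c * ip (act g x) u + ip x m0.
  have {1}-> : m = c *: u + m0 by rewrite scale_hnorm_normalize ?subrK.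
  by rewrite (ipDr Hip) (ipZr Hip) -{1}(Fix_m0 g) act_ip.
have -> : act g (t0 + sigma *: x) - m = (act g t0 - m) + sigma *: act g x.
  by rewrite actD actZ addrAC.
rewrite !(hnorm_sqr Hip) in hD *.
have hw : ip (act g x) (act g t0 - m) = ip x t0 - ip (act g x) m.
  by rewrite (ipBr Hip) act_ip.
move: (act g t0 - m) hD hw => w hD hw.
have -> : ip (w + sigma *: act g x) (w + sigma *: act g x) =
    ip w w + 2 * sigma * ip (act g x) w + sigma ^+ 2 * ip x x.
  rewrite (ipDl Hip) !(ipDr Hip) !(ipZl Hip) !(ipZr Hip) act_ip.
  by rewrite (ipC Hip w (act g x)); ring.
by rewrite hw hm (ipBr Hip); lra.
Qed.

End FixedPoints.

Section Noise.
Variables (d : measure_display) (T : measurableType d) (P : probability T R)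
  (eps : T -> M).
Hypothesis meas_ip : forall v, measurable_fun setT (fun w => ip (eps w) v).
Hypothesis meas_sqnorm : measurable_fun setT (fun w => hnorm ip (eps w) ^+ 2).
Hypothesis meas_sup :
  forall u, measurable_fun setT (fun w => sup (orbit_ip (eps w) u)).
Hypothesis mean0 : forall v, (\int[P]_w (ip (eps w) v)%:E = 0)%E.
Hypothesis sqnorm1 : (\int[P]_w (hnorm ip (eps w) ^+ 2)%:E = 1)%E.

Local Notation sqnorm w := (hnorm ip (eps w) ^+ 2).
Local Notation S m w := (sup (orbit_ip (eps w) ((hnorm ip m)^-1 *: m))).

Lemma integrable_sqnorm : P.-integrable setT (fun w => (sqnorm w)%:E).
Proof.
apply/integrableP; split; first exact/measurable_EFinP.
rewrite (eq_integral (fun w => (sqnorm w)%:E)) ?sqnorm1 ?ltry // => w _.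
by rewrite /= ger0_norm ?sqr_ge0.
Qed.

Lemma integrable_sqnorm_dominated (f : T -> R) (C k : R) :
  measurable_fun setT f -> (forall w, `|f w| <= C * sqnorm w + k) ->
  P.-integrable setT (fun w => (f w)%:E).
Proof.
move=> mf f_le.
apply: (le_integrable measurableT (g := fun w => (C%:E * (sqnorm w)%:E + k%:E)%E)).
- exact/measurable_EFinP.
- by move=> w _ /=; rewrite lee_fin (le_trans (f_le w) (ler_norm _)).
- apply: integrableD => //; first exact: (integrableZl measurableT C integrable_sqnorm).
  exact: finite_measure_integrable_cst.
Qed.

Lemma integrable_ip_noise v : P.-integrable setT (fun w => (ip (eps w) v)%:E).
Proof.
apply: (integrable_sqnorm_dominated (C := 1) (k := ip v v)) => // w.
by rewrite mul1r (hnorm_sqr Hip) (ip_abs_le Hip).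
Qed.

Lemma integrable_sup_orbit_noise m : P.-integrable setT (fun w => (S m w)%:E).
Proof.
set u := (hnorm ip m)^-1 *: m.
apply: (integrable_sqnorm_dominated (C := 1) (k := ip u u)) => [|w].
  exact: meas_sup.
by rewrite mul1r (hnorm_sqr Hip) sup_orbit_ip_abs.
Qed.

(* At [m = 0], where [nu] is [0] by definition, the direction [0^-1 *: 0] is [0]. *)
Lemma integral_sup_orbit_noise m :
  (\int[P]_w (S m w)%:E = (nu ip act P eps m)%:E)%E.
Proof.
rewrite /nu; case: eqP => [->|_]; last first.
  by rewrite fineK // (integrable_fin_num measurableT (integrable_sup_orbit_noise m)).
rewrite (eq_integral (fun=> 0%E)) ?integral0 // => w _.
by rewrite scaler0 sup_orbit_ip0.
Qed.

Lemma nu_ge0 m : 0 <= nu ip act P eps m.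
Proof.
set u := (hnorm ip m)^-1 *: m.
rewrite -lee_fin -integral_sup_orbit_noise.
apply: (@le_trans _ _ (\int[P]_w (ip (eps w) u)%:E)%E); first by rewrite mean0.
apply: le_integral => //; [exact: integrable_ip_noise|exact: integrable_sup_orbit_noise|].
by move=> w _; rewrite lee_fin -[X in ip X]act1 ip_act_le_sup.
Qed.

Lemma integrable_noise_affine (k a b c : R) v m :
  P.-integrable setT (fun w => (k + a * sqnorm w + b * ip (eps w) v + c * S m w)%:E).
Proof.
have ia := integrableZl measurableT a integrable_sqnorm.
have ib := integrableZl measurableT b (integrable_ip_noise v).
have ic := integrableZl measurableT c (integrable_sup_orbit_noise m).
have ik := finite_measure_integrable_cst P k measurableT.
apply: (eq_integrable measurableT (fun w => (k%:E + a%:E * (sqnorm w)%:E +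
  b%:E * (ip (eps w) v)%:E + c%:E * (S m w)%:E)%E)).
  by move=> w _; rewrite !EFinD !EFinM.
by do 3 apply: integrableD => //.
Qed.

Lemma integral_noise_affine (k a b c : R) v m :
  (\int[P]_w (k + a * sqnorm w + b * ip (eps w) v + c * S m w)%:E =
   (k + a + c * nu ip act P eps m)%:E)%E.
Proof.
have ia := integrableZl measurableT a integrable_sqnorm.
have ib := integrableZl measurableT b (integrable_ip_noise v).
have ic := integrableZl measurableT c (integrable_sup_orbit_noise m).
have ik := finite_measure_integrable_cst P k measurableT.
rewrite (eq_integral (fun w => k%:E + a%:E * (sqnorm w)%:E +
   b%:E * (ip (eps w) v)%:E + c%:E * (S m w)%:E)%E); last first.
  by move=> w _; rewrite !EFinD !EFinM.
rewrite integralD //; last by do 2 apply: integrableD => //.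
rewrite integralD //; last by apply: integrableD.
rewrite integralD // integral_cst // [X in (k%:E * X)%E](_ : _ = 1%E) ?mule1; last first.
  exact: probability_setT.
rewrite (integralZl measurableT integrable_sqnorm).
rewrite (integralZl measurableT (integrable_ip_noise v)).
rewrite (integralZl measurableT (integrable_sup_orbit_noise m)).
by rewrite sqnorm1 mean0 integral_sup_orbit_noise mule1 mule0 adde0 -EFinM -!EFinD.
Qed.

Section FrechetMean.
Variables (t0 : M) (sigma : R) (m0 : M).
Hypothesis meas_dQ :
  forall m, measurable_fun setT (fun w => dQ ip act (t0 + sigma *: eps w) m ^+ 2).
Hypothesis Fix_m0 : Fix act m0.
Hypothesis sigma_ge0 : 0 <= sigma.

Local Notation X := (fun w => t0 + sigma *: eps w).

Lemma dQ_sqr_center_le w : dQ ip act (X w) t0 ^+ 2 <= sigma ^+ 2 * sqnorm w.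
Proof.
rewrite -(real_normK (num_real sigma)) -exprMn -(hnormZ Hip).
by rewrite ler_pXn2r ?nnegrE ?dQ_ge0 ?hnorm_ge0 ?dQ_add_le.
Qed.

Lemma frechetF_center_le : (frechetF ip act P X t0 <= (sigma ^+ 2)%:E)%E.
Proof.
have int_dQ : P.-integrable setT (fun w => (dQ ip act (X w) t0 ^+ 2)%:E).
  apply: (integrable_sqnorm_dominated (C := sigma ^+ 2) (k := 0)) => [|w].
    exact: meas_dQ.
  by rewrite addr0 ger0_norm ?sqr_ge0 ?dQ_sqr_center_le.
rewrite /frechetF -[Y in (_ <= Y)%E]mule1 -sqnorm1.
rewrite -(integralZl measurableT integrable_sqnorm).
apply: le_integral => //.
  exact: (integrableZl measurableT (sigma ^+ 2) integrable_sqnorm).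
by move=> w _ /=; rewrite -EFinM lee_fin dQ_sqr_center_le.
Qed.

Lemma frechetF_ge m :
  P.-integrable setT (fun w => (dQ ip act (X w) m ^+ 2)%:E) ->
  ((dQ ip act m t0 ^+ 2 + sigma ^+ 2 - 2 * sigma * hnorm ip (m - m0) *
    nu ip act P eps (m - m0))%:E <= frechetF ip act P X m)%E.
Proof.
move=> int_dQ.
rewrite -mulNr -(@integral_noise_affine _ _ (2 * sigma) _ (t0 - m0) _).
apply: le_integral => //; first exact: integrable_noise_affine.
move=> w _ /=; rewrite lee_fin.
by have := @dQ_sqr_noise_ge t0 m0 Fix_m0 sigma (eps w) m sigma_ge0; lra.
Qed.

Lemma dQ_sqr_le_frechet_mean mstar : is_frechet_mean ip act P X mstar ->
  dQ ip act mstar t0 ^+ 2 <=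
    2 * sigma * hnorm ip (mstar - m0) * nu ip act P eps (mstar - m0).
Proof.
move=> frechet.
have F_le := le_trans (frechet t0) frechetF_center_le.
have int_dQ : P.-integrable setT (fun w => (dQ ip act (X w) mstar ^+ 2)%:E).
  apply/integrableP; split; first exact/measurable_EFinP.
  rewrite (eq_integral (fun w => (dQ ip act (X w) mstar ^+ 2)%:E)).
    exact: le_lt_trans F_le (ltry _).
  by move=> w _; rewrite /= ger0_norm ?sqr_ge0.
have := le_trans (frechetF_ge int_dQ) F_le.
by rewrite lee_fin; lra.
Qed.

End FrechetMean.

End Noise.

End IsometricAction.

Theorem mainTheorem15 (R : realType) (M : lmodType R) (ip : M -> M -> R)
  (G : Type) (mul : G -> G -> G) (one : G) (inv : G -> G) (act : G -> M -> M)
  (d : measure_display) (T : measurableType d) (P : probability T R)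
  (t0 : M) (sigma : R) (eps : T -> M) (mstar m0 : M) :
  is_real_hilbert ip ->
  is_lin_isom_group_action ip mul one inv act ->
  0 < sigma ->
  (forall v, measurable_fun setT (fun w => ip (eps w) v)) ->
  measurable_fun setT (fun w => hnorm ip (eps w) ^+ 2) ->
  (forall m, measurable_fun setT
     (fun w => dQ ip act (t0 + sigma *: eps w) m ^+ 2)) ->
  (forall u, measurable_fun setT
     (fun w => sup [set ip (act g (eps w)) u | g in [set: G]])) ->
  (forall v, (\int[P]_w (ip (eps w) v)%:E = 0)%E) ->
  (\int[P]_w (hnorm ip (eps w) ^+ 2)%:E = 1)%E ->
  is_frechet_mean ip act P (fun w => t0 + sigma *: eps w) mstar ->
  Fix act m0 -> (forall y, Fix act y -> ip (t0 - m0) y = 0) ->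
  let n := nu ip act P eps (mstar - m0) in
  dQ ip act mstar t0 <=
    sigma * n + Num.sqrt (sigma ^+ 2 * n ^+ 2
                          + 2 * dist_to ip t0 (Fix act) * sigma * n).
Proof.
move=> /real_hilbert_inner_product Hip HA sigma_gt0 meas_ip meas_sqnorm meas_dQ
  meas_sup mean0 sqnorm1 frechet Fix_m0 orth /=.
set n := nu ip act P eps (mstar - m0).
have n_ge0 : 0 <= n := nu_ge0 Hip HA meas_ip meas_sqnorm meas_sup mean0 sqnorm1 _.
have hD : dQ ip act mstar t0 ^+ 2 <= 2 * sigma * hnorm ip (mstar - m0) * n :=
  dQ_sqr_le_frechet_mean Hip HA meas_ip meas_sqnorm meas_sup mean0 sqnorm1
    meas_dQ Fix_m0 (ltW sigma_gt0) frechet.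
have hc := hnorm_sub_fix_le_dQ Hip HA t0 Fix_m0 mstar.
have hdist := hnorm_sub_proj_le_dist Hip HA Fix_m0 orth.
rewrite -exprMn -mulrA; apply: le_quadratic_root.
have sigma_n_ge0 : 0 <= sigma * n := mulr_ge0 (ltW sigma_gt0) n_ge0.
have := ler_wpM2l sigma_n_ge0 (le_trans hc (lerD (lexx _) hdist)).
lra.
Qed.
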